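(* Let $F:\mathcal{H}\to\mathbb{R}$ be differentiable with $L$-Lipschitz gradient, $\arg\min F\ne\emptyset$, satisfying (PL) with $\mu>0$, and assume $\mu\le L$. Let $\delta>0$ and $$\alpha_\pm=\frac12\Big(\delta+\frac{3L}{\delta}\pm\sqrt{\Big(\delta+\frac L\delta\Big)^2-4\mu}\Big).$$ Let $\alpha\in\big(\frac L\delta,\alpha_-\big]\cup\big[\alpha_+,\delta+\frac{2L}\delta\big)$ with $\alpha\ne\frac13\big(\delta+\frac{4L}{\delta}\big)$, and let $x(\cdot)$ be the solution of the heavy ball system with damping $\alpha$ and initial point $x_0$. Then for all $t\ge0$, $$F(x(t))-F_*\le (F(x_0)-F_* )\Big(1+\frac{\delta+\frac{2L}{\delta}-\alpha}{\big|\delta+\frac{4L}\delta-3\alpha\big|}\Big)e^{-mt},\qquad m=\min\Big\{\delta+\frac{2L}\delta-\alpha,\ 2\Big(\alpha-\frac L\delta\Big)\Big\}.$$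
   Context: (PL) with constant $\mu>0$: $F(x)-F_*\le \frac{1}{2\mu}\|\nabla F(x)\|^2$ for all $x$, where $F_*=\min F$. Heavy ball system: $\ddot x(t)+\alpha\dot x(t)+\nabla F(x(t))=0$, $x(0)=x_0$, $\dot x(0)=0$ (unique $C^2$ global solution). *)

From HB Require Import structures.
From mathcomp Require Import all_boot all_order all_algebra.
From mathcomp Require Import all_classical all_reals all_analysis.
Set Implicit Arguments. Unset Strict Implicit. Unset Printing Implicit Defensive.
Import Order.TTheory GRing.Theory Num.Theory.
Import numFieldNormedType.Exports.
Local Open Scope ring_scope.

(* [ip] is a real inner product on H inducing the norm of H
   (symmetric, linear in the first argument, |x|^2 = <x,x>).
   Together with completeness of H this makes H a real Hilbert space. *)
Definition is_inner_product {R : realType} {H : normedModType R}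
  (ip : H -> H -> R) : Prop :=
  [/\ (forall x y, ip x y = ip y x),
      (forall (a : R) (x y z : H), ip (a *: x + y) z = a * ip x z + ip y z)
    & (forall x : H, `|x| ^+ 2 = ip x x)].

Definition is_gradient {R : realType} {H : normedModType R}
  (ip : H -> H -> R) (F : H -> R) (gradF : H -> H) : Prop :=
  forall x : H, differentiable F x /\ forall h : H, 'd F x h = ip (gradF x) h.

From HB Require Import structures.
From mathcomp Require Import all_boot all_order all_algebra.
From mathcomp Require Import all_classical all_reals all_analysis.
From mathcomp Require Import ring lra.
Import Order.TTheory GRing.Theory Num.Theory.
Import numFieldNormedType.Exports.
Set Implicit Arguments.
Unset Strict Implicit.
Unset Printing Implicit Defensive.
Local Open Scope classical_set_scope.
Local Open Scope ring_scope.

(* Along the trajectory write u = x', g = grad F(x), and with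
   r1 = delta + 2L/delta - alpha, r2 = 2 (alpha - L/delta) consider the Lyapunov function
     E = r1 (F(x) - F_* ) + <u, g> + delta/2 |u|^2.
   The gradient is only Lipschitz, so <u, g> need not be differentiable; but its upper
   right Dini derivative is at most <u', g> + L |u|^2, and the heavy ball equation, (PL)
   and r1 r2 <= 2 mu (which is what the range of alpha amounts to) give D+ E <= - r2 E,
   hence e^(r2 t) E(t) <= r1 (F(x0) - F_* ). As (F o x)' = <g, u> <= E - r1 (F(x) - F_* ),
   this is the differential inequality
     (F o x)' + r1 (F(x) - F_* ) <= r1 (F(x0) - F_* ) e^(-r2 t),
   which integrates (Gronwall) to the bound; r1 != r2 is the excluded value of alpha. *)

Definition diff_quot {R : realType} {V : normedModType R} (f : R -> V) (t s : R) : V :=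
  s^-1 *: (f (s + t) - f t).

Lemma diff_quotE {R : realType} (f : R -> R) t s :
  diff_quot f t s = s^-1 * (f (s + t) - f t).
Proof. by []. Qed.

Section InnerProduct.
Variables (R : realType) (H : normedModType R) (ip : H -> H -> R).
Hypothesis hip : is_inner_product ip.

Lemma ipC x y : ip x y = ip y x.
Proof. by case: hip. Qed.

Lemma ipZDl a x y z : ip (a *: x + y) z = a * ip x z + ip y z.
Proof. by case: hip. Qed.

Lemma ipxx x : ip x x = `|x| ^+ 2.
Proof. by case: hip => _ _ ->. Qed.

Lemma ip0l z : ip 0 z = 0.
Proof. by have := ipZDl 1 0 0 z; rewrite scaler0 addr0 mul1r; lra. Qed.

Lemma ipDl x y z : ip (x + y) z = ip x z + ip y z.
Proof. by rewrite -{1}[x]scale1r ipZDl mul1r. Qed.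

Lemma ipZl a x z : ip (a *: x) z = a * ip x z.
Proof. by rewrite -[a *: x]addr0 ipZDl ip0l addr0. Qed.

Lemma ipBl x y z : ip (x - y) z = ip x z - ip y z.
Proof. by rewrite -scaleN1r ipDl ipZl mulN1r. Qed.

Lemma ip0r z : ip z 0 = 0.
Proof. by rewrite ipC ip0l. Qed.

Lemma ipZr a x z : ip z (a *: x) = a * ip z x.
Proof. by rewrite ipC ipZl ipC. Qed.

Lemma ipBr x y z : ip z (x - y) = ip z x - ip z y.
Proof. by rewrite ipC ipBl !(ipC z). Qed.

Lemma ip_le_norm x y : ip x y <= `|x| * `|y|.
Proof.
have [/normr0_eq0 ->|x_neq0] := eqVneq `|x| 0; first by rewrite ip0l normr0 mul0r.
have [/normr0_eq0 ->|y_neq0] := eqVneq `|y| 0; first by rewrite ip0r normr0 mulr0.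
have xy_gt0 : 0 < `|x| * `|y| by apply: mulr_gt0; rewrite lt_def ?x_neq0 ?y_neq0 normr_ge0.
have : 0 <= ip (`|y| *: x - `|x| *: y) (`|y| *: x - `|x| *: y) by rewrite ipxx sqr_ge0.
rewrite ipBl !ipBr !ipZl !ipZr !ipxx (ipC y x).
move=> norm_sq_ge0; have : 0 <= `|x| * `|y| * (`|x| * `|y| - ip x y) by lra.
by rewrite pmulr_rge0 // subr_ge0.
Qed.

Lemma norm_ip_le x y : `|ip x y| <= `|x| * `|y|.
Proof.
rewrite ler_norml ip_le_norm andbT.
by have := ip_le_norm x (- y); rewrite -scaleN1r ipZr normrZ normrN1 mul1r; lra.
Qed.

Lemma diff_quot_ip (a b : R -> H) t s :
  diff_quot (fun r => ip (a r) (b r)) t s =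
  ip (diff_quot a t s) (b (s + t)) + ip (a t) (diff_quot b t s).
Proof. by rewrite diff_quotE /diff_quot ipZl ipZr ipBl ipBr; ring. Qed.

Lemma cvg_ip {T} {F : set_system T} {FF : Filter F} (a b : T -> H) a0 b0 :
  a @ F --> a0 -> b @ F --> b0 -> (fun z => ip (a z) (b z)) @ F --> ip a0 b0.
Proof.
move=> a_cvg b_cvg.
have cvg_dist (c : T -> H) c0 : c @ F --> c0 -> (fun z => `|c z - c0|) @ F --> 0.
  move=> c_cvg; rewrite -(@normr0 _ H) -(subrr c0).
  by apply: cvg_norm; apply: cvgB => //; exact: cvg_cst.
pose bound z := `|a z - a0| * `|b z| + `|a0| * `|b z - b0|.
have ip_dist_le : \forall z \near F, cst 0 z <= `|ip (a z) (b z) - ip a0 b0| <= bound z.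
  apply: nearW => z; rewrite normr_ge0 /=.
  have -> : ip (a z) (b z) - ip a0 b0 = ip (a z - a0) (b z) + ip a0 (b z - b0).
    by rewrite ipBl ipBr; ring.
  by apply: (le_trans (ler_normD _ _)); apply: lerD; exact: norm_ip_le.
have bound_cvg0 : bound @ F --> 0.
  have -> : 0 = 0 * `|b0| + `|a0| * 0 :> R by rewrite mul0r mulr0 addr0.
  by apply: cvgD; apply: cvgM;
    [exact: cvg_dist | exact: cvg_norm | exact: cvg_cst | exact: cvg_dist].
apply/subr_cvg0; apply: norm_cvg0.
exact: (squeeze_cvgr ip_dist_le (cvg_cst _) bound_cvg0).
Qed.

End InnerProduct.

Section RightDerivative.
Variable R : realType.

Lemma derivable_continuous (V : normedModType R) (f : R -> V) t :
  derivable f t 1 -> {for t, continuous f}.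
Proof. by move=> /derivable1_diffP; exact: differentiable_continuous. Qed.

Lemma cvg_at_right_shift (V : normedModType R) (f : R -> V) t :
  {for t, continuous f} -> (fun s => f (s + t)) @ 0^'+ --> f t.
Proof.
move=> f_cont; apply: cvg_at_right_filter.
have shift_cvg : (fun s : R => s + t) @ 0 --> t.
  by rewrite -{2}[t]add0r; apply: cvgD; [exact: cvg_id | exact: cvg_cst].
exact: (cvg_comp _ _ shift_cvg f_cont).
Qed.

Lemma diff_quot_cvg (V : normedModType R) (f : R -> V) t :
  derivable f t 1 -> diff_quot f t @ 0^'+ --> 'D_1 f t.
Proof.
move=> f_der; apply: cvg_dnbhs_at_right.
have -> : (fun s => s^-1 *: (f (s + t) - f t))
          = fun s => s^-1 *: ((f \o shift t) (s *: 1) - f t).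
  by apply: funext => s; rewrite /= [s *: 1]mulr1.
exact: f_der.
Qed.

Lemma diff_quotZ c (f : R -> R) t :
  diff_quot (fun s => c * f s) t = fun s => c * diff_quot f t s.
Proof. by apply: funext => s; rewrite !diff_quotE; ring. Qed.

Lemma lipschitz_continuous (V W : normedModType R) (f : V -> W) (k : R) :
  (forall y z, `|f y - f z| <= k * `|y - z|) -> continuous f.
Proof.
move=> f_lip y; apply/subr_cvg0; apply: norm_cvg0.
have dist_le : \forall z \near y, cst 0 z <= `|f z - f y| <= k * `|z - y|.
  by apply: nearW => z /=; rewrite normr_ge0 f_lip.
have : (fun z => k * `|z - y|) @ y --> 0.
  rewrite -(mulr0 k) -(@normr0 _ V) -(subrr y).
  by apply: cvgM; [exact: cvg_cst | apply: cvg_norm; apply: cvgB; [exact: cvg_id | exact: cvg_cst]].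
exact/(squeeze_cvgr dist_le (cvg_cst _)).
Qed.

Lemma is_derive_expRM (k t : R) :
  is_derive t 1 (fun s => expR (k * s)) (k * expR (k * t)).
Proof.
have k_der : is_derive t 1 ( *%R k) k.
  by apply: is_derive_eq; rewrite /GRing.scale /= mulr1.
by rewrite mulrC; exact: (is_derive1_comp (is_derive_expR (k * t)) k_der).
Qed.

Lemma continuous_expRM (k t : R) : {for t, continuous (fun s => expR (k * s))}.
Proof. by case: (is_derive_expRM k t) => + _; exact: derivable_continuous. Qed.

Lemma expRM_cvg0 (k : R) : (fun s => expR (k * s)) @ 0^'+ --> (1 : R).
Proof.
by rewrite -(expR0 R) -[X in _ --> expR X](mulr0 k); exact/cvg_at_right_filter/continuous_expRM.
Qed.

Lemma diff_quot_expRM (k t : R) :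
  diff_quot (fun s => expR (k * s)) t @ 0^'+ --> k * expR (k * t).
Proof. by case: (is_derive_expRM k t) => der <-; exact: diff_quot_cvg. Qed.

End RightDerivative.

(* The upper right Dini derivative of h at t is at most w, witnessed by a majorant of the
   difference quotients that tends to w. *)
Definition upper_dini_le {R : realType} (h : R -> R) (t w : R) : Prop :=
  exists2 W : R -> R,
    \forall s \near 0^'+, diff_quot h t s <= W s & W @ 0^'+ --> w.

Section UpperDini.
Variable R : realType.
Implicit Types (f h k : R -> R) (t v w : R).

Lemma upper_dini_le_cvg h t w : diff_quot h t @ 0^'+ --> w -> upper_dini_le h t w.
Proof. by exists (diff_quot h t) => //; apply: nearW. Qed.

Lemma upper_dini_le_trans h t v w : v <= w -> upper_dini_le h t v -> upper_dini_le h t w.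
Proof.
move=> vw [W hW W_cvg]; exists (fun s => W s + (w - v)).
  near=> s; rewrite -[diff_quot h t s]addr0 lerD ?subr_ge0 //; near: s; exact: hW.
rewrite -[X in _ --> X](subrKC v w).
by apply: cvgD; [exact: W_cvg | exact: cvg_cst].
Unshelve. all: end_near.
Qed.

Lemma upper_dini_leD f h t v w :
  upper_dini_le f t v -> upper_dini_le h t w ->
  upper_dini_le (fun s => f s + h s) t (v + w).
Proof.
move=> [V fV V_cvg] [W hW W_cvg]; exists (fun s => V s + W s); last exact: cvgD.
near=> s; have -> : diff_quot (fun s => f s + h s) t s = diff_quot f t s + diff_quot h t s.
  by rewrite !diff_quotE; ring.
by apply: lerD; near: s; [exact: fV | exact: hW].
Unshelve. all: end_near.
Qed.

Lemma upper_dini_leZ c h t w :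
  0 <= c -> upper_dini_le h t w -> upper_dini_le (fun s => c * h s) t (c * w).
Proof.
move=> c_ge0 [W hW W_cvg]; exists (fun s => c * W s); last by apply: cvgM => //; exact: cvg_cst.
near=> s; rewrite diff_quotZ.
by apply: ler_wpM2l => //; near: s; exact: hW.
Unshelve. all: end_near.
Qed.

Lemma upper_dini_leMl k h t w :
  (forall s, 0 <= k s) -> derivable k t 1 -> upper_dini_le h t w ->
  upper_dini_le (fun s => k s * h s) t ('D_1 k t * h t + k t * w).
Proof.
move=> k_ge0 k_der [W hW W_cvg].
exists (fun s => diff_quot k t s * h t + k (s + t) * W s).
  near=> s; have -> : diff_quot (fun s => k s * h s) t s
                      = diff_quot k t s * h t + k (s + t) * diff_quot h t s.
    by rewrite !diff_quotE; ring.
  by apply: lerD => //; apply: ler_wpM2l => //; near: s; exact: hW.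
apply: cvgD; apply: cvgM => //.
- exact: diff_quot_cvg.
- exact: cvg_cst.
- exact/cvg_at_right_shift/derivable_continuous.
Unshelve. all: end_near.
Qed.

Lemma upper_dini_le0_slope h t w e : upper_dini_le h t w -> w <= 0 -> 0 < e ->
  \forall s \near 0^'+, h (s + t) <= h t + e * s.
Proof.
move=> [W hW W_cvg] w_le0 e_gt0; near=> s.
have s_gt0 : 0 < s by near: s; exact: nbhs_right_gt.
have : diff_quot h t s < e.
  apply: (le_lt_trans (_ : _ <= W s)); first by near: s; exact: hW.
  by near: s; apply: (cvgr_lt w W_cvg); exact: le_lt_trans w_le0 e_gt0.
by rewrite diff_quotE mulrC ltr_pdivrMr // => ?; lra.
Unshelve. all: end_near.
Qed.

End UpperDini.

Section NonincreasingOfDini.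
Variables (R : realType) (h : R -> R).
Hypotheses (h_cont : forall t, 0 < t -> {for t, continuous h})
  (h_dini : forall t, 0 < t -> upper_dini_le h t 0).

(* The points of [a, b] where the chord bound holds form a set whose sup is attained by
   continuity, and which the Dini bound extends beyond any point left of b. *)
Lemma upper_dini_le0_chord a b e : 0 < a -> a < b -> 0 < e ->
  h b <= h a + e * (b - a).
Proof.
move=> a_gt0 ab e_gt0.
pose S := [set t : R | a <= t <= b /\ h t <= h a + e * (t - a)].
have Sa : S a by split; [rewrite lexx ltW | rewrite subrr mulr0 addr0].
have S_sup : has_sup S by split; [exists a | exists b => t [/andP[_ ->]]].
set c := sup S.
have ac : a <= c by exact: sup_upper_bound.
have cb : c <= b by apply: ge_sup; [exists a | move=> t [/andP[_ ->]]].
have c_gt0 : 0 < c by exact: lt_le_trans a_gt0 ac.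
have Sc : h c <= h a + e * (c - a).
  rewrite leNgt; apply/negP => hc_gt.
  have k_cvg : (fun t => h t - e * t) @ c --> h c - e * c.
    apply: cvgB; first exact: h_cont.
    by apply: cvgM; [exact: cvg_cst | exact: cvg_id].
  have : \forall t \near c, h a - e * a < h t - e * t.
    by apply: (cvgr_gt (h c - e * c) k_cvg); move: hc_gt; rewrite mulrBr; lra.
  move=> /(iffLR (nbhs_normP _ _)) [eta eta_gt0 near_c].
  have [t St ct] := sup_adherent eta_gt0 S_sup.
  have tc : t <= c by exact: sup_upper_bound.
  have : h a - e * a < h t - e * t.
    by apply: near_c; rewrite /ball_ /= ger0_norm; rewrite -/c in ct; lra.
  by case: St; lra.
suff <- : c = b by [].
apply/eqP; rewrite eq_le cb /= leNgt; apply/negP => c_lt_b.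
near (0:R)^'+ => s.
have s_gt0 : 0 < s by near: s; exact: nbhs_right_gt.
have s_lt : s < b - c by near: s; apply: nbhs_right_lt; lra.
have hs : h (s + c) <= h c + e * s.
  by near: s; exact: (upper_dini_le0_slope (h_dini c_gt0) (lexx 0) e_gt0).
have : S (s + c) by split; [apply/andP; split; lra | lra].
by move=> /(sup_upper_bound S_sup); rewrite -/c; lra.
Unshelve. all: end_near.
Qed.

Lemma upper_dini_le0_le_right_lim h0 : h @ 0^'+ --> h0 ->
  forall t, 0 < t -> h t <= h0.
Proof.
move=> h_cvg.
have h_nincr a b : 0 < a -> a < b -> h b <= h a.
  move=> a_gt0 ab; apply/ler_addgt0Pr => e e_gt0.
  have ba_gt0 : 0 < b - a by lra.
  have := upper_dini_le0_chord a_gt0 ab (divr_gt0 e_gt0 ba_gt0).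
  by rewrite -mulrA mulVf ?mulr1 // gt_eqF.
move=> t t_gt0; rewrite leNgt; apply/negP => h0_lt.
near (0:R)^'+ => a.
have ha : h a < h t by near: a; exact: (cvgr_lt h0 h_cvg).
have a_gt0 : 0 < a by near: a; exact: nbhs_right_gt.
have a_lt : a < t by near: a; exact: nbhs_right_lt.
by have := h_nincr a t a_gt0 a_lt; lra.
Unshelve. all: end_near.
Qed.

End NonincreasingOfDini.

Lemma gronwall_exp_bound (R : realType) (a b t p p0 : R) :
  0 < a -> 0 < b -> a != b -> 0 <= t -> 0 <= p0 ->
  expR (a * t) * p - a * p0 / (a - b) * expR ((a - b) * t) <= p0 - a * p0 / (a - b) ->
  p <= p0 * (1 + a / `|a - b|) * expR (- Num.min a b * t).
Proof.
move=> a_gt0 b_gt0 ab_neq t_ge0 p0_ge0 gronwall.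
have ea_gt0 := expR_gt0 (a * t).
have eabE : expR ((a - b) * t) = expR (a * t) * expR (- b * t).
  by rewrite -expRD; congr expR; ring.
have [ab_gt0|ab_le0] := ltrP 0 (a - b).
- rewrite min_r; last by rewrite -subr_ge0 ltW.
  rewrite (ger0_norm (ltW ab_gt0)) -(ler_pM2l ea_gt0).
  have eab_ge1 : 1 <= expR ((a - b) * t) by rewrite -expR0 ler_expR mulr_ge0 // ltW.
  have c_ge0 : 0 <= p0 * (a / (a - b)) by rewrite mulr_ge0 // divr_ge0 // ltW.
  have cE : a * p0 / (a - b) = p0 * (a / (a - b)) by rewrite mulrCA mulrA.
  rewrite cE eabE in gronwall; rewrite eabE in eab_ge1; rewrite mulrDr mulr1.
  have : 0 <= p0 * (expR (a * t) * expR (- b * t) - 1) by rewrite mulr_ge0 // subr_ge0.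
  move: c_ge0 gronwall; set c := p0 * _; set ea := expR (a * t); set eb := expR _.
  lra.
- have ab_lt0 : a - b < 0 by rewrite lt_neqAle subr_eq0 ab_neq.
  rewrite min_l; last by rewrite -subr_le0 ltW.
  rewrite ltr0_norm // mulNr expRN -(ler_pM2l ea_gt0) mulrCA divff ?gt_eqF // mulr1.
  have d_ge0 : 0 <= p0 * (a / - (a - b)) by rewrite mulr_ge0 // divr_ge0 ?oppr_ge0 // ltW.
  have cE : a * p0 / (a - b) = - (p0 * (a / - (a - b))) by rewrite invrN !mulrN opprK mulrCA mulrA.
  rewrite cE in gronwall.
  have := mulr_ge0 d_ge0 (expR_ge0 ((a - b) * t)); nra.
Qed.

Section HeavyBall.
Variables (R : realType) (H : normedModType R) (ip : H -> H -> R).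
Variables (F : H -> R) (gradF : H -> H) (L mu delta alpha r1 r2 : R).
Variables (xstar x0 : H) (x : R -> H).
Hypotheses (hip : is_inner_product ip) (hgrad : is_gradient ip F gradF).
Hypothesis gradF_lip : forall y z, `|gradF y - gradF z| <= L * `|y - z|.
Hypothesis F_ge_min : forall y, F xstar <= F y.
Hypotheses (mu_gt0 : 0 < mu)
  (hPL : forall y, F y - F xstar <= (2 * mu)^-1 * `|gradF y| ^+ 2).
Hypotheses (delta_gt0 : 0 < delta)
  (r1E : r1 = delta + 2 * (L / delta) - alpha) (r2E : r2 = 2 * (alpha - L / delta))
  (r1_gt0 : 0 < r1) (r2_gt0 : 0 < r2) (r1r2_le : r1 * r2 <= 2 * mu).
Hypotheses (x_der : forall t, 0 < t -> derivable x t 1)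
  (dx_der : forall t, 0 < t -> derivable ('D_1 x) t 1)
  (heavy_ball : forall t, 0 < t ->
     'D_1 ('D_1 x) t + alpha *: 'D_1 x t + gradF (x t) = 0)
  (x_cvg0 : x @ 0^'+ --> x0) (dx_cvg0 : 'D_1 x @ 0^'+ --> 0).

Let u := 'D_1 x.
Let g s := gradF (x s).
Let gap s := F (x s) - F xstar.
Let gap0 := F x0 - F xstar.
Let Q s := ip (u s) (g s).
Let P s := ip (u s) (u s).
Let lyap s := r1 * gap s + Q s + delta / 2 * P s.

Lemma gap_ge0 s : 0 <= gap s.
Proof. by rewrite subr_ge0. Qed.

Lemma PL_gap s : 2 * mu * gap s <= ip (g s) (g s).
Proof.
have two_mu_gt0 : 0 < 2 * mu by rewrite mulr_gt0.
by rewrite (ipxx hip) -ler_pdivlMl //; exact: (hPL (x s)).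
Qed.

Lemma F_continuous y : {for y, continuous F}.
Proof. exact/differentiable_continuous/(hgrad y).1. Qed.

Lemma gap_continuous t : 0 < t -> {for t, continuous gap}.
Proof.
move=> t_gt0; apply: cvgB; last exact: cvg_cst.
apply: continuous_comp; first exact/derivable_continuous/x_der.
exact: F_continuous.
Qed.

Lemma g_continuous t : 0 < t -> {for t, continuous g}.
Proof.
move=> t_gt0; apply: continuous_comp; first exact/derivable_continuous/x_der.
exact: lipschitz_continuous gradF_lip _.
Qed.

Lemma lyap_continuous t : 0 < t -> {for t, continuous lyap}.
Proof.
move=> t_gt0; have u_cont := derivable_continuous (dx_der t_gt0).
apply: cvgD; first apply: cvgD.
- by apply: cvgM; [exact: cvg_cst | exact: gap_continuous].
- by apply: (cvg_ip hip) => //; exact: g_continuous.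
- by apply: cvgM; [exact: cvg_cst | exact: (cvg_ip hip)].
Qed.

Lemma gap_cvg0 : gap @ 0^'+ --> gap0.
Proof.
apply: cvgB; last exact: cvg_cst.
apply: cvg_comp; [exact: x_cvg0 | exact: F_continuous].
Qed.

Lemma lyap_cvg0 : lyap @ 0^'+ --> r1 * gap0.
Proof.
have g_cvg0 : g @ 0^'+ --> gradF x0.
  by apply: cvg_comp; [exact: x_cvg0 | exact: lipschitz_continuous gradF_lip _].
rewrite -[r1 * gap0]addr0 -[X in X + 0]addr0 -[X in _ + _ + X](mulr0 (delta / 2)).
apply: cvgD; first apply: cvgD.
- by apply: cvgM; [exact: cvg_cst | exact: gap_cvg0].
- by rewrite -[X in _ --> X](ip0l hip (gradF x0)); exact: (cvg_ip hip).
- by apply: cvgM; [exact: cvg_cst | rewrite -[X in _ --> X](ip0l hip 0); exact: (cvg_ip hip)].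
Qed.

Lemma diff_quot_gap t : 0 < t -> diff_quot gap t @ 0^'+ --> Q t.
Proof.
move=> t_gt0; have x_diff : differentiable x t by apply/derivable1_diffP/x_der.
have Fx_diff : differentiable (F \o x) t.
  exact: differentiable_comp x_diff (hgrad _).1.
have -> : diff_quot gap t = diff_quot (F \o x) t.
  by apply: funext => s; rewrite !diff_quotE /gap /=; congr (_ * _); ring.
have -> : Q t = 'D_1 (F \o x) t.
  rewrite deriveE // diff_comp //=; last exact: (hgrad _).1.
  by rewrite (hgrad (x t)).2 -deriveE //; exact: ipC.
exact/diff_quot_cvg/diff_derivable.
Qed.

Lemma heavy_ball_accel t : 0 < t -> 'D_1 u t = (- alpha) *: u t - g t.
Proof.
move=> t_gt0; apply/eqP; rewrite scaleNr -opprD -addr_eq0 addrA.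
exact/eqP/heavy_ball.
Qed.

Lemma upper_dini_Q t : 0 < t -> upper_dini_le Q t (ip ('D_1 u t) (g t) + L * P t).
Proof.
move=> t_gt0.
exists (fun s => ip (diff_quot u t s) (g (s + t)) + `|u t| * L * `|diff_quot x t s|).
  apply: nearW => s; rewrite (diff_quot_ip hip) lerD2l.
  apply: le_trans (ip_le_norm hip _ _) _; rewrite -mulrA; apply: ler_wpM2l => //.
  by rewrite /diff_quot !normrZ mulrCA; apply: ler_wpM2l => //; exact: gradF_lip.
have -> : L * P t = `|u t| * L * `|u t| by rewrite /P (ipxx hip); ring.
apply: cvgD.
- apply: (cvg_ip hip); first exact/diff_quot_cvg/dx_der.
  exact/cvg_at_right_shift/g_continuous.
- by apply: cvgM; [exact: cvg_cst | apply: cvg_norm; exact/diff_quot_cvg/x_der].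
Qed.

Lemma diff_quot_P t : 0 < t ->
  diff_quot P t @ 0^'+ --> ip ('D_1 u t) (u t) + ip (u t) ('D_1 u t).
Proof.
move=> t_gt0; have u_cvg := diff_quot_cvg (dx_der t_gt0).
have -> : diff_quot P t = fun s =>
    ip (diff_quot u t s) (u (s + t)) + ip (u t) (diff_quot u t s).
  by apply: funext => s; rewrite (diff_quot_ip hip).
apply: cvgD; apply: (cvg_ip hip) => //; last exact: cvg_cst.
exact/cvg_at_right_shift/derivable_continuous/dx_der.
Qed.

Lemma upper_dini_lyap t : 0 < t -> upper_dini_le lyap t (- r2 * lyap t).
Proof.
move=> t_gt0.
have delta_half_ge0 : 0 <= delta / 2 by rewrite divr_ge0 // ltW.
have := upper_dini_leD
  (upper_dini_leD (upper_dini_leZ (ltW r1_gt0) (upper_dini_le_cvg (diff_quot_gap t_gt0)))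
                  (upper_dini_Q t_gt0))
  (upper_dini_leZ delta_half_ge0 (upper_dini_le_cvg (diff_quot_P t_gt0))).
apply: upper_dini_le_trans.
rewrite heavy_ball_accel // !(ipBl hip) !(ipBr hip) !(ipZl hip) !(ipZr hip).
rewrite (ipC hip (g t) (u t)) /lyap /Q /P.
set q := ip (u t) (g t); set p := ip (u t) (u t).
have PL := PL_gap t; have r1r2_gap := ler_wpM2r (gap_ge0 t) r1r2_le.
(* for this choice of r1 and r2 the <u, g> and |u|^2 terms cancel *)
suff -> : - r2 * (r1 * gap t + q + delta / 2 * p) = r1 * q
    + (- alpha * q - ip (g t) (g t) + L * p) + delta / 2 * (- alpha * p - q + (- alpha * p - q))
    + ip (g t) (g t) - r1 * r2 * gap t by lra.
by rewrite r1E r2E; field; rewrite gt_eqF.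
Qed.

Lemma lyap_decay t : 0 < t -> expR (r2 * t) * lyap t <= r1 * gap0.
Proof.
apply: (upper_dini_le0_le_right_lim (h := fun s => expR (r2 * s) * lyap s)).
- move=> s s_gt0; apply: cvgM; last exact: lyap_continuous.
  exact: continuous_expRM.
- move=> s s_gt0; case: (is_derive_expRM r2 s) => expR_der expR_D.
  have := upper_dini_leMl (fun s => expR_ge0 (r2 * s)) expR_der (upper_dini_lyap s_gt0).
  by apply: upper_dini_le_trans; rewrite expR_D; lra.
- rewrite -[X in _ --> X]mul1r; apply: cvgM; last exact: lyap_cvg0.
  exact: expRM_cvg0.
Qed.

Lemma gap_gronwall t : r1 != r2 -> 0 < t ->
  expR (r1 * t) * gap t - r1 * gap0 / (r1 - r2) * expR ((r1 - r2) * t)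
  <= gap0 - r1 * gap0 / (r1 - r2).
Proof.
move=> r12_neq; set c := r1 * gap0 / (r1 - r2).
rewrite -!(mulNr c).
apply: (upper_dini_le0_le_right_lim
  (h := fun s => expR (r1 * s) * gap s + - c * expR ((r1 - r2) * s))).
- move=> s s_gt0; apply: cvgD; last by apply: cvgM; [exact: cvg_cst | exact: continuous_expRM].
  by apply: cvgM; [exact: continuous_expRM | exact: gap_continuous].
- move=> s s_gt0; case: (is_derive_expRM r1 s) => expR_der expR_D.
  have exp_dini : upper_dini_le (fun s => - c * expR ((r1 - r2) * s)) s
                                 (- c * ((r1 - r2) * expR ((r1 - r2) * s))).
    apply: upper_dini_le_cvg; rewrite diff_quotZ.
    by apply: cvgM; [exact: cvg_cst | exact: diff_quot_expRM].
  have := upper_dini_leD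
    (upper_dini_leMl (fun s => expR_ge0 (r1 * s)) expR_der
                     (upper_dini_le_cvg (diff_quot_gap s_gt0))) exp_dini.
  apply: upper_dini_le_trans; rewrite expR_D.
  have decay := lyap_decay s_gt0; rewrite /lyap !mulrDr in decay.
  have P_term_ge0 : 0 <= expR (r2 * s) * (delta / 2 * P s).
    rewrite mulr_ge0 ?expR_ge0 // mulr_ge0 ?divr_ge0 ?(ltW delta_gt0) //.
    by rewrite /P (ipxx hip) sqr_ge0.
  have e1E : expR (r1 * s) = expR ((r1 - r2) * s) * expR (r2 * s).
    by rewrite -expRD; congr expR; ring.
  rewrite e1E /c.
  have -> : r1 * (expR ((r1 - r2) * s) * expR (r2 * s)) * gap s
      + expR ((r1 - r2) * s) * expR (r2 * s) * Q s
      + - (r1 * gap0 / (r1 - r2)) * ((r1 - r2) * expR ((r1 - r2) * s))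
      = expR ((r1 - r2) * s) * (expR (r2 * s) * (r1 * gap s + Q s) - r1 * gap0).
    by field; rewrite subr_eq0.
  apply: mulr_ge0_le0; [exact: expR_ge0 | rewrite !mulrDr; lra].
- rewrite -[X in _ --> X + _]mul1r -[X in _ --> _ + X]mulr1.
  by apply: cvgD; apply: cvgM;
    [exact: expRM_cvg0 | exact: gap_cvg0 | exact: cvg_cst | exact: expRM_cvg0].
Qed.

Lemma heavy_ball_gap_bound t : r1 != r2 -> x 0 = x0 -> 0 <= t ->
  F (x t) - F xstar
  <= (F x0 - F xstar) * (1 + r1 / `|r1 - r2|) * expR (- Num.min r1 r2 * t).
Proof.
move=> r12_neq x0E; rewrite le_eqVlt => /predU1P[<-|t_gt0].
  rewrite mulr0 expR0 mulr1 /gap x0E ler_peMr ?subr_ge0 //.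
  by rewrite lerDl divr_ge0 // ltW.
apply: gronwall_exp_bound => //; [exact: ltW | by rewrite subr_ge0 | exact: gap_gronwall].
Qed.

End HeavyBall.

Lemma heavy_ball_rates (R : realType) (l mu delta alpha : R) :
  mu <= delta * l ->
  let s := Num.sqrt ((delta + l) ^+ 2 - 4 * mu) in
  (l < alpha <= (delta + 3 * l - s) / 2) \/ ((delta + 3 * l + s) / 2 <= alpha < delta + 2 * l) ->
  [/\ 0 < delta + 2 * l - alpha, 0 < 2 * (alpha - l)
    & (delta + 2 * l - alpha) * (2 * (alpha - l)) <= 2 * mu].
Proof.
move=> mu_le s alpha_range.
have disc_ge0 : 0 <= (delta + l) ^+ 2 - 4 * mu.
  by have := sqr_ge0 (delta - l); nra.
have s_ge0 : 0 <= s := sqrtr_ge0 _.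
have s2 : s ^+ 2 = (delta + l) ^+ 2 - 4 * mu := sqr_sqrtr disc_ge0.
have rateE : (delta + 2 * l - alpha) * (2 * (alpha - l)) - 2 * mu
    = - 2 * (((delta + 3 * l - s) / 2 - alpha) * ((delta + 3 * l + s) / 2 - alpha)).
  by lra.
case: alpha_range => /andP[lo hi].
- have d1 : 0 <= (delta + 3 * l - s) / 2 - alpha by lra.
  have d2 : 0 <= (delta + 3 * l + s) / 2 - alpha by lra.
  by have := mulr_ge0 d1 d2; split; lra.
- have d1 : 0 <= alpha - (delta + 3 * l - s) / 2 by lra.
  have d2 : 0 <= alpha - (delta + 3 * l + s) / 2 by lra.
  by have := mulr_ge0 d1 d2; split; lra.
Qed.

Theorem theorem6p1 (R : realType) (H : completeNormedModType R)
  (ip : H -> H -> R) (F : H -> R) (gradF : H -> H)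
  (L mu delta alpha : R) (xstar x0 : H) (x : R -> H) :
  is_inner_product ip ->
  is_gradient ip F gradF ->
  (forall y z : H, `|gradF y - gradF z| <= L * `|y - z|) ->
  (forall y : H, F xstar <= F y) ->
  0 < mu ->
  (forall y : H, F y - F xstar <= (2 * mu)^-1 * `|gradF y| ^+ 2) ->
  mu <= L ->
  0 < delta ->
  (let alpham := (delta + 3 * L / delta
                  - Num.sqrt ((delta + L / delta) ^+ 2 - 4 * mu)) / 2 in
   let alphap := (delta + 3 * L / delta
                  + Num.sqrt ((delta + L / delta) ^+ 2 - 4 * mu)) / 2 in
   (L / delta < alpha <= alpham) \/ (alphap <= alpha < delta + 2 * L / delta)) ->
  alpha != (delta + 4 * L / delta) / 3 ->
  (forall t, 0 < t -> derivable x t 1) ->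
  (forall t, 0 < t -> derivable ('D_1 x) t 1) ->
  (forall t, 0 < t ->
     'D_1 ('D_1 x) t + alpha *: 'D_1 x t + gradF (x t) = 0) ->
  x 0 = x0 ->
  x @ 0^'+ --> x0 ->
  ('D_1 x) @ 0^'+ --> (0 : H) ->
  forall t : R, 0 <= t ->
    F (x t) - F xstar <=
      (F x0 - F xstar)
      * (1 + (delta + 2 * L / delta - alpha)
             / `|delta + 4 * L / delta - 3 * alpha|)
      * expR (- (Num.min (delta + 2 * L / delta - alpha)
                         (2 * (alpha - L / delta))) * t).
Proof.
move=> hip hgrad gradF_lip F_ge_min mu_gt0 hPL mu_le_L delta_gt0 alpha_range alpha_neq
  x_der dx_der heavy_ball x0E x_cvg0 dx_cvg0 t t_ge0.
have mulLdE k : k * L / delta = k * (L / delta) by rewrite mulrA.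
rewrite !mulLdE in alpha_range alpha_neq *.
have L_E : L = delta * (L / delta) by rewrite mulrC divfK ?gt_eqF.
rewrite L_E in mu_le_L.
have [r1_gt0 r2_gt0 r1r2_le] := heavy_ball_rates mu_le_L alpha_range.
have -> : delta + 4 * (L / delta) - 3 * alpha
          = (delta + 2 * (L / delta) - alpha) - 2 * (alpha - L / delta) by ring.
apply: (heavy_ball_gap_bound hip hgrad gradF_lip F_ge_min mu_gt0 hPL delta_gt0
  erefl erefl r1_gt0 r2_gt0 r1r2_le x_der dx_der heavy_ball x_cvg0 dx_cvg0 _ x0E t_ge0).
by apply: contra_neq alpha_neq => r12_eq; lra.
Qed.
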